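(* Let $d \in \mathbb{N}$, $s \in \{1,\dots,d\}$, $M \geq 1$, $y \in [0,1]^d$, and $p \in (0,\infty]$. Then \[ \operatorname{supp} \vartheta_{M,y}^{(s)} \subset y + (M^{-1} [-1,1]^s \times \mathbb{R}^{d - s}) \] and \[ \frac12 \cdot (4s)^{-s/p}\cdot M^{-s/p}\le \| \vartheta_{M,y}^{(s)} \|_{L^p([0,1]^d)} \le 2^{s/p} \cdot M^{-s/p} . \]
   Context: Let $\varrho(x)=\max\{0,x\}$. For $M>0$, $\sigma\in\mathbb{R}$ define $\Lambda_{M,\sigma}:\mathbb{R}\to(-\infty,1]$ by $\Lambda_{M,\sigma}(t)=0$ if $t\le \sigma-\frac1M$ and $\Lambda_{M,\sigma}(t)=1-M|t-\sigma|$ if $t\ge\sigma-\frac1M$. For $s\in\{1,\dots,d\}$ and $y\in\mathbb{R}^d$ define $\Delta^{(s)}_{M,y}(x)=\big(\sum_{i=1}^s\Lambda_{M,y_i}(x_i)\big)-(s-1)$ and $\vartheta^{(s)}_{M,y}(x)=\varrho(\Delta^{(s)}_{M,y}(x))$ for $x\in\mathbb{R}^d$. For $p=\infty$, $s/p=0$. *)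

From HB Require Import structures.
From mathcomp Require Import all_boot all_order all_algebra.
From mathcomp Require Import all_classical all_reals all_analysis.
Set Implicit Arguments. Unset Strict Implicit. Unset Printing Implicit Defensive.
Import Order.TTheory GRing.Theory Num.Theory.
Import numFieldNormedType.Exports.
Local Open Scope ring_scope.
Local Open Scope classical_set_scope.

Section defs.
Variable R : realType.

Definition relu (x : R) : R := Num.max 0 x.

Definition Lambda (M sigma t : R) : R :=
  if t <= sigma - M^-1 then 0 else 1 - M * `|t - sigma|.

(* Delta^{(s)}_{M,y}(x) = sum_{i=1}^s Lambda_{M,y_i}(x_i) - (s-1); coordinates
   are indexed from 0, so i = 1..s becomes i = 0..s-1. *)
Definition Delta (d s : nat) (M : R) (y x : 'I_d -> R) : R :=
  (\sum_(i < d | (i < s)%N) Lambda M (y i) (x i)) - (s%:R - 1).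

Definition theta (d s : nat) (M : R) (y : 'I_d -> R) (x : 'I_d -> R) : R :=
  relu (Delta s M y x).

Definition supp_fun (d : nat) (f : ('I_d -> R) -> R) : set ('I_d -> R) :=
  closure ([set x | f x != 0] : set {ptws 'I_d -> R}).

(* Iterated Lebesgue integral over [0,1]^n (Tonelli: equals the integral
   against the d-dimensional Lebesgue measure for nonnegative measurable g). *)
Fixpoint iter_int (n : nat) (g : (nat -> R) -> \bar R) : \bar R :=
  match n with
  | 0 => g (fun _ => 0)
  | n'.+1 => (\int[@lebesgue_measure R]_(t in `[0%R, 1%R]%classic)
               iter_int n' (fun x => g (fun k => if k is k'.+1 then x k' else t)))%E
  end.

Definition cube_int (d : nat) (g : ('I_d -> R) -> \bar R) : \bar R :=
  iter_int d (fun x => g (fun i => x (nat_of_ord i))).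

(* L^p([0,1]^d) norm, p in (0, oo]; for p = oo the essential supremum
   w.r.t. Lebesgue measure on [0,1]^d (measure of A = cube integral of 1_A). *)
Definition LpNorm_cube (d : nat) (p : \bar R) (f : ('I_d -> R) -> R) : \bar R :=
  match p with
  | r%:E => ((cube_int (fun x => (`|f x|%:E `^ r)%E)) `^ r^-1)%E
  | +oo%E => ereal_inf [set c : \bar R |
               cube_int (fun x => if (c < `|f x|%:E)%E then 1%E else 0%E) = 0%E]
  | -oo%E => 0%E
  end.

(* s/p, with the convention s/p = 0 for p = oo *)
Definition s_over_p (s : nat) (p : \bar R) : R :=
  match p with
  | r%:E => s%:R / r
  | _ => 0
  end.

End defs.

From HB Require Import structures.
From mathcomp Require Import all_boot all_order all_algebra.
From mathcomp Require Import all_classical all_reals all_analysis.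
From mathcomp Require Import ring lra.
From mathcomp Require Import measurable_realfun.
Set Implicit Arguments. Unset Strict Implicit. Unset Printing Implicit Defensive.
Import Order.TTheory GRing.Theory Num.Theory.
Import numFieldNormedType.Exports.
Local Open Scope ring_scope.
Local Open Scope classical_set_scope.

(* theta takes values in [0, 1] and vanishes unless |x_i - y_i| < 1/M for every
   i < s, so on the unit cube it is dominated by the indicator of a box of
   volume at most (2/M)^s.  Conversely, on the cylinder |x_i - y_i| <= 1/(4sM)
   (i < s) each of the s factors Lambda is at least 1 - 1/(4s), so theta >= 1/2
   there; since y lies in the cube, this cylinder meets the cube in a box of
   volume at least (4sM)^-s.  Both boxes are integrated coordinate by
   coordinate, and taking r-th roots (or the essential supremum) gives the
   bounds. *)

Section big_ord_prefix.
Variable R : comPzRingType.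

Lemma sumr_ord_prefix_const (d s : nat) (c : R) : (s <= d)%N ->
  \sum_(i < d | (i < s)%N) c = c *+ s.
Proof. by move=> sd; rewrite -(big_ord_widen _ (fun=> c) sd) sumr_const card_ord. Qed.

Lemma prodr_ord_prefix_const (d s : nat) (c : R) : (s <= d)%N ->
  \prod_(i < d | (i < s)%N) c = c ^+ s.
Proof. by move=> sd; rewrite -(big_ord_widen _ (fun=> c) sd) prodr_const card_ord. Qed.

End big_ord_prefix.

Section theta_pointwise.
Variable R : realType.

Lemma Lambda_le1 (M sigma t : R) : 0 <= M -> Lambda M sigma t <= 1.
Proof.
move=> M0; rewrite /Lambda; case: ifP => _ //.
by rewrite lerBlDr lerDl mulr_ge0.
Qed.

Lemma Lambda_gt0_dist (M sigma t : R) : 0 < M ->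
  0 < Lambda M sigma t -> `|t - sigma| < M^-1.
Proof.
move=> M0; rewrite /Lambda; case: ifP; first by rewrite ltxx.
by rewrite subr_gt0 -ltr_pdivlMl // mulr1.
Qed.

Lemma Lambda_near (M sigma t : R) : `|t - sigma| < M^-1 ->
  Lambda M sigma t = 1 - M * `|t - sigma|.
Proof.
rewrite ltr_distlC => /andP[lo hi].
by rewrite /Lambda ifN // -ltNge; lra.
Qed.

Variables (d s : nat) (M : R) (y : 'I_d -> R).
Hypothesis s_le_d : (s <= d)%N.

Lemma DeltaE x :
  Delta s M y x = \sum_(i < d | (i < s)%N) (Lambda M (y i) (x i) - 1) + 1.
Proof. by rewrite /Delta sumrB sumr_ord_prefix_const //; lra. Qed.

Lemma theta_ge0 x : 0 <= theta s M y x.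
Proof. by rewrite /theta /relu le_max lexx. Qed.

Lemma theta_le1 x : 0 <= M -> theta s M y x <= 1.
Proof.
move=> M0; rewrite /theta /relu ge_max ler01 /= DeltaE.
have : \sum_(i < d | (i < s)%N) (Lambda M (y i) (x i) - 1) <= 0.
  by apply: sumr_le0 => i _; rewrite subr_le0 Lambda_le1.
lra.
Qed.

Lemma theta_neq0_dist x : 0 < M -> theta s M y x != 0 ->
  forall i : 'I_d, (i < s)%N -> `|x i - y i| < M^-1.
Proof.
move=> M0 th j js.
have Delta_gt0 : 0 < Delta s M y x.
  by move: th; rewrite /theta /relu; case: ltP => //; rewrite eqxx.
apply: Lambda_gt0_dist => //; rewrite ltNge; apply/negP => Lj.
move: Delta_gt0; rewrite DeltaE // (bigD1 j) //=.
have : \sum_(i < d | (i < s)%N && (i != j)) (Lambda M (y i) (x i) - 1) <= 0.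
  by apply: sumr_le0 => i _; rewrite subr_le0 Lambda_le1 // ltW.
lra.
Qed.

Lemma theta_ge_near x (e : R) : 0 <= M -> e < M^-1 ->
  (forall i : 'I_d, (i < s)%N -> `|x i - y i| <= e) ->
  1 - s%:R * (M * e) <= theta s M y x.
Proof.
move=> M0 eM near_y; rewrite /theta /relu le_max DeltaE; apply/orP; right.
have : \sum_(i < d | (i < s)%N) - (M * e) <=
       \sum_(i < d | (i < s)%N) (Lambda M (y i) (x i) - 1).
  apply: ler_sum => i /near_y xi; rewrite Lambda_near ?(le_lt_trans xi) //.
  have : M * `|x i - y i| <= M * e by rewrite ler_wpM2l.
  lra.
rewrite sumr_ord_prefix_const // -mulr_natl; lra.
Qed.

Lemma supp_theta_sub : 0 < M ->
  supp_fun (theta s M y) `<=`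
  [set x | forall i : 'I_d, (i < s)%N -> `|x i - y i| <= M^-1].
Proof.
move=> M0.
pose E : set {ptws 'I_d -> R} := \bigcap_(i in [set i : 'I_d | (i < s)%N])
  (proj i @^-1` [set r : R | y i - M^-1 <= r] `&`
   proj i @^-1` [set r : R | r <= y i + M^-1]).
have closedE : closed E.
  apply: closed_bigI => i _; apply: closedI; apply: preimage_closed => //;
  by move=> z _; exact: proj_continuous.
have subE : ([set x | theta s M y x != 0] : set {ptws 'I_d -> R}) `<=` E.
  move=> x /= /(theta_neq0_dist M0) near_y i /= /near_y /ltW.
  by rewrite ler_distlC /proj => /andP[h1 h2]; split; lra.
move=> x /(closureS subE) /closedE Ex i iS.
have [/= h1 h2] := Ex i iS.
by rewrite /proj in h1 h2; rewrite ler_distlC; apply/andP; split; lra.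
Qed.

End theta_pointwise.

Section iterated_integral.
Variable R : realType.
Local Open Scope ereal_scope.

(* [ge0_integralE] defines the integral of a nonnegative function as a
   supremum over simple minorants, so monotonicity needs no measurability. *)
Lemma ge0_le_integral_nonmeasurable d (T : measurableType d)
    (mu : {measure set T -> \bar R}) (D : set T) (f1 f2 : T -> \bar R) :
  (forall x, D x -> 0 <= f1 x) -> (forall x, D x -> f1 x <= f2 x) ->
  \int[mu]_(x in D) f1 x <= \int[mu]_(x in D) f2 x.
Proof.
move=> f1_ge0 f12.
have f2_ge0 x : D x -> 0 <= f2 x by move=> Dx; exact: le_trans (f1_ge0 x Dx) (f12 x Dx).
rewrite ge0_integralE // [leRHS]ge0_integralE //.
apply: ge_ereal_sup => _ [h hf <-]; apply: ereal_sup_ubound; exists h => // x.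
apply: le_trans (hf x) _; rewrite /patch; case: ifPn => [|//].
by rewrite inE => Dx; exact: f12.
Qed.

Definition in_unit_cube_nat (x : nat -> R) := forall k, (0 <= x k <= 1)%R.

Lemma in_unit_cube_nat0 : in_unit_cube_nat (fun _ => 0%R).
Proof. by move=> k; rewrite lexx ler01. Qed.

Lemma in_unit_cube_nat_cons (t : R) x : `[0%R, 1%R] t -> in_unit_cube_nat x ->
  in_unit_cube_nat (fun k => if k is k'.+1 then x k' else t).
Proof. by move=> t01 x01 [|k] //=; move: t01; rewrite /= in_itv. Qed.

Lemma iter_int_ge0 n (g : (nat -> R) -> \bar R) :
  (forall x, in_unit_cube_nat x -> 0 <= g x) -> 0 <= iter_int n g.
Proof.
elim: n g => [|n IH] g g_ge0 /=; first exact/g_ge0/in_unit_cube_nat0.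
apply: integral_ge0 => t t01; apply: IH => x x01.
exact/g_ge0/in_unit_cube_nat_cons.
Qed.

Lemma le_iter_int n (g1 g2 : (nat -> R) -> \bar R) :
  (forall x, in_unit_cube_nat x -> 0 <= g1 x) ->
  (forall x, in_unit_cube_nat x -> g1 x <= g2 x) -> iter_int n g1 <= iter_int n g2.
Proof.
elim: n g1 g2 => [|n IH] g1 g2 g1_ge0 g12 /=; first exact/g12/in_unit_cube_nat0.
apply: ge0_le_integral_nonmeasurable => t t01.
  by apply: iter_int_ge0 => x x01; exact/g1_ge0/in_unit_cube_nat_cons.
by apply: IH => x x01; [apply: g1_ge0|apply: g12]; exact: in_unit_cube_nat_cons.
Qed.

Lemma iter_int0 n : iter_int n (fun _ : nat -> R => 0) = 0.
Proof. by elim: n => [|n IH] //=; apply: integral0_eq => t _; rewrite IH. Qed.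

Lemma lebesgue_measure_itv_cap01 (a b : R) : (Num.max a 0 <= Num.min b 1)%R ->
  lebesgue_measure (`[a, b] `&` `[0%R, 1%R]) = (Num.min b 1 - Num.max a 0)%:E.
Proof.
move=> ab.
have -> : `[a, b] `&` `[0%R, 1%R] = `[Num.max a 0%R, Num.min b 1%R]%classic.
  apply/seteqP; split => t /=; rewrite !in_itv /= ?ge_max ?le_min.
    by move=> [/andP[-> ->] /andP[-> ->]].
  by move=> /andP[/andP[-> ->] /andP[-> ->]].
rewrite lebesgue_measure_itv /=; case: ifPn => [_|]; first by rewrite EFinB.
rewrite lte_fin -leNgt => ba.
have -> : Num.min b 1%R = Num.max a 0%R by apply/eqP; rewrite eq_le ab ba.
by rewrite subrr.
Qed.

Lemma iter_int_box n (a b : nat -> R) (c : R) : (0 <= c)%R ->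
  (forall k, Num.max (a k) 0 <= Num.min (b k) 1)%R ->
  iter_int n (fun x => (c * \prod_(k < n) \1_`[a k, b k] (x k))%:E) =
  (c * \prod_(k < n) (Num.min (b k) 1 - Num.max (a k) 0))%:E.
Proof.
elim: n a b c => [|n IH] a b c c_ge0 ab /=; first by rewrite !big_ord0.
pose P := (\prod_(k < n) (Num.min (b k.+1) 1 - Num.max (a k.+1) 0))%R.
transitivity (\int[lebesgue_measure]_(t in `[0%R, 1%R])
                ((c * P)%:E * (\1_`[a 0%N, b 0%N] t)%:E)).
  apply: eq_integral => t _; rewrite -EFinM.
  rewrite (_ : (c * P * _ = c * \1_`[a 0%N, b 0%N] t * P)%R); last by ring.
  rewrite /P -(IH (fun k => a k.+1) (fun k => b k.+1)) ?mulr_ge0 //.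
  congr iter_int; apply: funext => x; congr EFin.
  by rewrite big_ord_recl /= mulrA.
rewrite ge0_integralZl_EFin //; last 2 first.
- by apply/measurable_EFinP; exact: measurable_indic.
- by rewrite mulr_ge0 // prodr_ge0 // => k _; rewrite subr_ge0 ab.
rewrite integral_indic // [X in _ * X = _](lebesgue_measure_itv_cap01 (ab 0%N)).
rewrite -EFinM big_ord_recl -/P.
by congr EFin; ring.
Qed.

End iterated_integral.

Section cube_integral.
Variables (R : realType) (d : nat).
Implicit Types (a b x : 'I_d -> R).

Definition in_unit_cube x := forall i, 0 <= x i <= 1.

Definition box_ind a b x : R := \prod_i \1_`[a i, b i] (x i).

Lemma box_indE a b x :
  box_ind a b x = if [forall i, a i <= x i <= b i] then 1 else 0.
Proof.
rewrite /box_ind; case: ifPn => [/forallP ab_x|].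
  by rewrite big1 // => i _; rewrite indicE mem_set //= in_itv /= ab_x.
rewrite negb_forall => /existsP[i ab_xi]; rewrite (bigD1 i) //= indicE memNset.
  by rewrite mul0r.
by rewrite /= in_itv /=; apply/negP.
Qed.

Lemma box_ind_ge0 a b x : 0 <= box_ind a b x.
Proof. by rewrite box_indE; case: ifP. Qed.

Local Open Scope ereal_scope.

Lemma cube_int_ge0 (g : ('I_d -> R) -> \bar R) :
  (forall x, in_unit_cube x -> 0 <= g x) -> 0 <= cube_int g.
Proof. by move=> g_ge0; apply: iter_int_ge0 => x x01; apply: g_ge0. Qed.

Lemma le_cube_int (g1 g2 : ('I_d -> R) -> \bar R) :
  (forall x, in_unit_cube x -> 0 <= g1 x) -> (forall x, in_unit_cube x -> g1 x <= g2 x) ->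
  cube_int g1 <= cube_int g2.
Proof.
by move=> g1_ge0 g12; apply: le_iter_int => x x01; [apply: g1_ge0|apply: g12].
Qed.

Lemma cube_int_box a b (c : R) : (0 <= c)%R ->
  (forall i, Num.max (a i) 0 <= Num.min (b i) 1)%R ->
  cube_int (fun x => (c * box_ind a b x)%:E) =
  (c * \prod_i (Num.min (b i) 1 - Num.max (a i) 0))%:E.
Proof.
move=> c_ge0 ab.
pose ext (f : 'I_d -> R) (z : R) k := if insub k is Some i then f i else z.
have extE f z (i : 'I_d) : ext f z i = f i by rewrite /ext valK.
rewrite /cube_int /box_ind.
have -> : (\prod_i (Num.min (b i) 1 - Num.max (a i) 0) =
           \prod_(k < d) (Num.min (ext b 1 k) 1 - Num.max (ext a 0 k) 0))%R
  by apply: eq_bigr => i _; rewrite !extE.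
rewrite -iter_int_box //; last first.
  by move=> k; rewrite /ext; case: insub => [i|]; rewrite ?maxxx ?minxx.
congr iter_int; apply: funext => x.
by congr (_ * _)%:E; apply: eq_bigr => i _; rewrite !extE.
Qed.

End cube_integral.

Section cylinder.
Variable R : realType.

Lemma centered_itv_cap01 (c e : R) : 0 <= c <= 1 -> 0 <= e ->
  [/\ Num.max (c - e) 0 <= Num.min (c + e) 1,
      Num.min (c + e) 1 - Num.max (c - e) 0 <= 2 * e &
      (e <= 1 -> e <= Num.min (c + e) 1 - Num.max (c - e) 0)].
Proof.
move=> /andP[c0 c1] e0.
by case: (lerP (c + e) 1) => ?; case: (lerP (c - e) 0) => ?; split; lra.
Qed.

Variables (d s : nat) (y : 'I_d -> R).
Hypotheses (s_le_d : (s <= d)%N) (y01 : forall i, 0 <= y i <= 1).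

(* The cylinder [y + [-e, e]^s * R^(d - s)] clipped to the unit cube, as a box:
   the coordinates [i >= s] range over all of [[0, 1]]. *)
Definition cyl_lo (e : R) (i : 'I_d) : R := if (i < s)%N then y i - e else 0.
Definition cyl_hi (e : R) (i : 'I_d) : R := if (i < s)%N then y i + e else 1.
Definition cyl_vol (e : R) : R :=
  \prod_i (Num.min (cyl_hi e i) 1 - Num.max (cyl_lo e i) 0).

Lemma cyl_lo_le_hi e i : 0 <= e -> Num.max (cyl_lo e i) 0 <= Num.min (cyl_hi e i) 1.
Proof.
move=> e0; rewrite /cyl_lo /cyl_hi; case: ifP => _.
  by case: (centered_itv_cap01 (y01 i) e0).
by rewrite maxxx minxx ler01.
Qed.

Lemma cyl_vol_le e : 0 <= e -> cyl_vol e <= (2 * e) ^+ s.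
Proof.
move=> e0; rewrite -(prodr_ord_prefix_const _ s_le_d) big_mkcond /=.
apply: ler_prod => i _; rewrite subr_ge0 cyl_lo_le_hi //= /cyl_lo /cyl_hi.
case: ifP => _; last by rewrite maxxx minxx subr0.
by case: (centered_itv_cap01 (y01 i) e0).
Qed.

Lemma cyl_vol_ge e : 0 <= e <= 1 -> e ^+ s <= cyl_vol e.
Proof.
move=> /andP[e0 e1]; rewrite -(prodr_ord_prefix_const _ s_le_d) big_mkcond /=.
apply: ler_prod => i _; rewrite /cyl_lo /cyl_hi; case: ifP => _.
  by rewrite e0 /=; case: (centered_itv_cap01 (y01 i) e0) => _ _; apply.
by rewrite maxxx minxx subr0 ler01 lexx.
Qed.

Lemma box_ind_cyl_dist e x : box_ind (cyl_lo e) (cyl_hi e) x != 0 ->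
  forall i : 'I_d, (i < s)%N -> `|x i - y i| <= e.
Proof.
rewrite box_indE; case: forallP => [in_box _ i iS|]; last by rewrite eqxx.
by move: (in_box i); rewrite /cyl_lo /cyl_hi iS ler_distlC => /andP[? ?]; lra.
Qed.

Lemma box_ind_cyl1 e x : in_unit_cube x -> (forall i : 'I_d, (i < s)%N -> `|x i - y i| <= e) ->
  box_ind (cyl_lo e) (cyl_hi e) x = 1.
Proof.
move=> x01 near_y; rewrite box_indE ifT //; apply/forallP => i.
rewrite /cyl_lo /cyl_hi; case: ifP => [/near_y|_]; last exact: x01.
by rewrite ler_distlC => /andP[? ?]; lra.
Qed.

End cylinder.

Section powR_identities.
Variable R : realType.

Lemma powR_exprn_inv (a r : R) n : 0 <= a -> (a ^+ n) `^ r^-1 = a `^ (n%:R / r).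
Proof. by move=> a0; rewrite -powR_mulrn // -powRrM. Qed.

Lemma powR_invl (a r : R) : 0 <= a -> a^-1 `^ r = a `^ (- r).
Proof. by move=> a0; rewrite -powR_inv1 // -powRrM mulN1r. Qed.

End powR_identities.

Section theta_norm.
Variables (R : realType) (d s : nat) (M : R) (y : 'I_d -> R).
Hypotheses (s_gt0 : (0 < s)%N) (s_le_d : (s <= d)%N) (M_ge1 : 1 <= M)
  (y01 : forall i, 0 <= y i <= 1).

Let M_gt0 : 0 < M. Proof. exact: lt_le_trans ltr01 M_ge1. Qed.
Let M_ge0 : 0 <= M. Proof. exact: ltW M_gt0. Qed.

Let delta := (4 * s%:R * M)^-1.

Let M_lt_4sM : M < 4 * s%:R * M.
Proof.
have s_ge1 : 1 <= s%:R :> R by rewrite ler1n.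
by rewrite ltr_pMl //; lra.
Qed.

Let foursM_gt0 : 0 < 4 * s%:R * M. Proof. exact: lt_trans M_gt0 M_lt_4sM. Qed.
Let delta_gt0 : 0 < delta. Proof. by rewrite invr_gt0. Qed.
Let delta_ge0 : 0 <= delta. Proof. exact: ltW delta_gt0. Qed.
Let delta_le1 : delta <= 1.
Proof. by rewrite invf_le1 // (le_trans M_ge1 (ltW M_lt_4sM)). Qed.
Let delta_lt_invM : delta < M^-1.
Proof. by rewrite ltf_pV2. Qed.

Lemma theta_ge_half x : (forall i : 'I_d, (i < s)%N -> `|x i - y i| <= delta) ->
  2^-1 <= theta s M y x.
Proof.
move=> near_y; apply: le_trans (theta_ge_near s_le_d M_ge0 delta_lt_invM near_y).
have -> : s%:R * (M * delta) = 4^-1 :> R by rewrite /delta; field; rewrite !gt_eqF // ltr0n.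
lra.
Qed.

Lemma theta_pow_le_box r x : 0 < r -> in_unit_cube x ->
  `|theta s M y x| `^ r <= box_ind (cyl_lo s y M^-1) (cyl_hi s y M^-1) x.
Proof.
move=> r_gt0 x01; rewrite ger0_norm ?theta_ge0 //.
have [->|th_neq0] := eqVneq (theta s M y x) 0.
  by rewrite powR0 ?gt_eqF // box_ind_ge0.
rewrite box_ind_cyl1 //; last by move=> i /(theta_neq0_dist s_le_d M_gt0 th_neq0) /ltW.
have -> : 1 = 1 `^ r :> R by rewrite powR1.
by apply: ge0_ler_powR; rewrite ?nnegrE ?theta_ge0 ?ler01 ?theta_le1 // ltW.
Qed.

Lemma theta_pow_ge_box r x : 0 <= r ->
  2^-1 `^ r * box_ind (cyl_lo s y delta) (cyl_hi s y delta) x <= `|theta s M y x| `^ r.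
Proof.
move=> r_ge0; rewrite ger0_norm ?theta_ge0 //.
have [->|/box_ind_cyl_dist near_y] := eqVneq (box_ind (cyl_lo s y delta) (cyl_hi s y delta) x) 0.
  by rewrite mulr0 powR_ge0.
have box_le1 : box_ind (cyl_lo s y delta) (cyl_hi s y delta) x <= 1.
  by rewrite box_indE; case: ifP.
apply: le_trans (ler_wpM2l (powR_ge0 _ _) box_le1) _; rewrite mulr1.
by apply: ge0_ler_powR; rewrite ?nnegrE ?theta_ge0 // theta_ge_half.
Qed.

Local Open Scope ereal_scope.

Lemma cube_int_theta_pow_le r : (0 < r)%R ->
  cube_int (fun x => `|theta s M y x|%:E `^ r) <= ((2 / M) ^+ s)%:E.
Proof.
move=> r_gt0; have invM_ge0 : (0 <= M^-1)%R by rewrite invr_ge0.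
apply: le_trans (le_cube_int
  (g2 := fun x => (1 * box_ind (cyl_lo s y M^-1) (cyl_hi s y M^-1) x)%:E) _ _) _.
- by move=> x _; exact: poweR_ge0.
- by move=> x x01; rewrite poweR_EFin mul1r lee_fin theta_pow_le_box.
rewrite cube_int_box ?ler01 // => [|i]; last exact: cyl_lo_le_hi.
by rewrite mul1r lee_fin cyl_vol_le.
Qed.

Lemma cube_int_theta_pow_ge r : (0 <= r)%R ->
  ((2^-1 `^ r) * delta ^+ s)%:E <= cube_int (fun x => `|theta s M y x|%:E `^ r).
Proof.
move=> r_ge0; apply: le_trans (le_cube_int (g1 := fun x =>
  (2^-1 `^ r * box_ind (cyl_lo s y delta) (cyl_hi s y delta) x)%:E) _ _).
- rewrite cube_int_box ?powR_ge0 // => [|i]; last exact: cyl_lo_le_hi.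
  by rewrite lee_fin ler_wpM2l ?powR_ge0 // cyl_vol_ge // delta_ge0.
- by move=> x _; rewrite lee_fin mulr_ge0 ?powR_ge0 ?box_ind_ge0.
- by move=> x _; rewrite poweR_EFin lee_fin theta_pow_ge_box.
Qed.

Lemma LpNorm_theta_le r : (0 < r)%R ->
  LpNorm_cube r%:E (theta s M y) <= (2 `^ (s%:R / r) * M `^ (- (s%:R / r)))%:E.
Proof.
move=> r_gt0; have ri_ge0 : (0 <= r^-1)%R by rewrite invr_ge0 ltW.
have -> : (2 `^ (s%:R / r) * M `^ (- (s%:R / r)) = ((2 / M) ^+ s) `^ r^-1)%R.
  by rewrite powR_exprn_inv ?divr_ge0 // powRM ?invr_ge0 // powR_invl.
rewrite -poweR_EFin; apply: gt0_ler_poweR => //.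
- by rewrite in_itv /= leey andbT; apply: cube_int_ge0 => x _ /=; rewrite lee_fin powR_ge0.
- by rewrite in_itv /= leey andbT lee_fin exprn_ge0 // divr_ge0.
exact: cube_int_theta_pow_le.
Qed.

Lemma LpNorm_theta_ge r : (0 < r)%R ->
  (2^-1 * (4 * s%:R) `^ (- (s%:R / r)) * M `^ (- (s%:R / r)))%:E <=
  LpNorm_cube r%:E (theta s M y).
Proof.
move=> r_gt0; have ri_ge0 : (0 <= r^-1)%R by rewrite invr_ge0 ltW.
have -> : (2^-1 * (4 * s%:R) `^ (- (s%:R / r)) * M `^ (- (s%:R / r)) =
           (2^-1 `^ r * delta ^+ s) `^ r^-1)%R.
  rewrite [RHS]powRM ?powR_ge0 ?exprn_ge0 // -powRrM mulfV ?gt_eqF // powRr1 ?invr_ge0 //.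
  by rewrite powR_exprn_inv // powR_invl ?(ltW foursM_gt0) // -mulrA -powRM ?mulr_ge0.
rewrite -poweR_EFin; apply: gt0_ler_poweR => //.
- by rewrite in_itv /= leey andbT lee_fin mulr_ge0 ?powR_ge0 ?exprn_ge0.
- by rewrite in_itv /= leey andbT; apply: cube_int_ge0 => x _ /=; rewrite lee_fin powR_ge0.
exact/cube_int_theta_pow_ge/ltW.
Qed.

Lemma LpNorm_theta_oo_le : LpNorm_cube +oo (theta s M y) <= 1%:E.
Proof.
apply: ereal_inf_lbound => /=.
rewrite (_ : (fun x => _) = fun _ => 0); first exact: iter_int0.
by apply/funext => x; rewrite lte_fin ger0_norm ?theta_ge0 // ltNge theta_le1.
Qed.

Lemma LpNorm_theta_oo_ge : (2^-1)%:E <= LpNorm_cube +oo (theta s M y).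
Proof.
apply/ereal_infP => c /= null_c; rewrite leNgt; apply/negP => c_lt.
suff : ((1 * delta ^+ s)%:E <= 0) by rewrite lee_fin mul1r leNgt exprn_gt0.
rewrite -null_c; apply: le_trans (le_cube_int
  (g1 := fun x => (1 * box_ind (cyl_lo s y delta) (cyl_hi s y delta) x)%:E) _ _).
- rewrite cube_int_box ?ler01 // => [|i]; last exact: cyl_lo_le_hi.
  by rewrite lee_fin ler_wpM2l ?ler01 // cyl_vol_ge // delta_ge0.
- by move=> x _; rewrite lee_fin mul1r box_ind_ge0.
move=> x _; rewrite mul1r.
have [->|/box_ind_cyl_dist near_y] :=
  eqVneq (box_ind (cyl_lo s y delta) (cyl_hi s y delta) x) 0%R; first by case: ifP.
rewrite ifT; first by rewrite lee_fin box_indE; case: ifP.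
by apply: lt_le_trans c_lt _; rewrite lee_fin ger0_norm ?theta_ge0 // theta_ge_half.
Qed.

End theta_norm.

Theorem lemma2p3 (R : realType) (d s : nat) (M : R) (y : 'I_d -> R) (p : \bar R) :
  (1 <= s <= d)%N -> 1 <= M -> (forall i, 0 <= y i <= 1) -> (0 < p)%E ->
  supp_fun (theta s M y) `<=` [set x | forall i : 'I_d, (i < s)%N -> `|x i - y i| <= M^-1]
  /\ ((2^-1 * (4 * s%:R) `^ (- s_over_p s p) * M `^ (- s_over_p s p))%:E
        <= LpNorm_cube p (theta s M y))%E
  /\ (LpNorm_cube p (theta s M y) <= (2 `^ (s_over_p s p) * M `^ (- s_over_p s p))%:E)%E.
Proof.
move=> /andP[s_gt0 s_le_d] M_ge1 y01 p_gt0.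
split; first by apply: supp_theta_sub => //; exact: lt_le_trans ltr01 M_ge1.
case: p p_gt0 => [r r_gt0||//] /=.
  rewrite lte_fin in r_gt0.
  by split; [exact: LpNorm_theta_ge | exact: LpNorm_theta_le].
rewrite oppr0 !powRr0 !mulr1; split.
  exact: LpNorm_theta_oo_ge.
exact: LpNorm_theta_oo_le.
Qed.
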